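(* Let $G$ be a finite group with $K(G)>1$ and $Z_2>Z(G)$, and write $K=K(G)$. Then the following are equivalent: (1) $Z_K>Z(G)$; (2) there exists $g\in G$ with $[g,G]=K$; (3) $K=[Z_K,G]$.
   Context: For $\chi\in\mathrm{Irr}(G)$, the center of $\chi$ is $Z(\chi)=\{g\in G : |\chi(g)|=\chi(1)\}$. For a nonabelian group $G$, let $\mathcal{X}=\{\chi\in\mathrm{Irr}(G) : Z(\chi)>Z(G)\}$ (strict containment) and define $K(G)=\bigcap_{\chi\in\mathcal{X}}\ker(\chi)$; if $G$ is abelian, set $K(G)=G$. $Z_2$ is defined by $Z_2/Z(G)=Z(G/Z(G))$; for a normal subgroup $N$, $Z_N$ is defined by $Z_N/N=Z(G/N)$. For $g\in G$, $[g,G]$ is the subgroup generated by $\{[g,x]:x\in G\}$. *)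

From mathcomp Require Import all_boot all_order all_algebra all_fingroup all_solvable all_field all_character.
Set Implicit Arguments. Unset Strict Implicit. Unset Printing Implicit Defensive.
Import GroupScope GRing.Theory Num.Theory.
Local Open Scope ring_scope.

(* Z(chi) is mathcomp's cfcenter: [set g in G | `|chi g| == chi 1] for a character chi. *)

(* K(G) = intersection of ker chi over irreducible chi with Z(G) < Z(chi);
   K(G) = G if G is abelian. (Intersection taken inside G, so empty family gives G.) *)
Definition KG (gT : finGroupType) (G : {group gT}) : {set gT} :=
  if abelian G then G
  else (G :&: \bigcap_(i : Iirr G | 'Z(G) \proper ('Z('chi_i))%CF) cfker 'chi[G]_i)%g.

Definition ZN (gT : finGroupType) (G N : {group gT}) : {set gT} :=
  (coset N @*^-1 'Z(G / N))%g.

Definition commg_elt (gT : finGroupType) (g : gT) (G : {set gT}) : {set gT} :=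
  (<<[set [~ g, x] | x in G]>>)%g.

From mathcomp Require Import all_boot all_order all_algebra all_fingroup all_solvable all_field all_character.
Set Implicit Arguments.
Unset Strict Implicit.
Unset Printing Implicit Defensive.
Import GroupScope.

(* For g in G \ Z(G), the normal subgroup [g, G] is the intersection of the
   kernels of the irreducible chi containing it, and for each such chi the
   element g is central modulo ker chi, i.e. g lies in Z(chi) = Z_{ker chi} but
   not in Z(G).  Hence K <= [g, G].  As Z_K consists of the g with [g, G] <= K,
   any g in Z_K \ Z(G) has [g, G] = K; conversely [g, G] = K > 1 puts g in
   Z_K \ Z(G) and squeezes [Z_K, G] between [g, G] and K; finally
   [Z_K, G] = K > 1 rules out Z_K = Z(G). *)

Lemma commg_set1_center (gT : finGroupType) (G : {group gT}) g :
  g \in G -> ([~: [set g], G] == 1) = (g \in 'Z(G)).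
Proof.
move=> Gg; apply/eqP/idP => [/commG1P | /setIP[_ cGg]]; last first.
  by apply/commG1P; rewrite sub1set.
by rewrite sub1set => cGg; apply/setIP.
Qed.

Lemma commg_eltE (gT : finGroupType) (g : gT) (G : {set gT}) :
  commg_elt g G = [~: [set g], G].
Proof.
congr <<_>>; apply/setP=> y.
apply/imsetP/imset2P => [[x Gx ->] | [_ x /set1P-> Gx ->]]; last by exists x.
by exists g x; rewrite ?set11.
Qed.

Section CommutatorModulo.

Variables (gT : finGroupType) (G N : {group gT}).
Hypothesis nsNG : N <| G.

Lemma mem_ZN x : (x \in ZN G N) = (x \in G) && ([~: [set x], G] \subset N).
Proof.
have nNG := normal_norm nsNG.
have sZNG : ZN G N \subset G.
  by rewrite /ZN -{2}(quotientGK nsNG) morphpreS ?center_sub.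
rewrite -(setIidPr sZNG) inE; case Gx: (x \in G) => //=.
rewrite /ZN -sub1set -sub_quotient_pre -?quotient_cents2 ?sub1set ?(subsetP nNG) //.
by rewrite subsetI quotientS ?sub1set.
Qed.

Lemma center_sub_ZN : 'Z(G) \subset ZN G N.
Proof.
apply/subsetP=> z Zz; have Gz := subsetP (center_sub G) z Zz.
by move: Zz; rewrite mem_ZN Gz -commg_set1_center // => /eqP->; rewrite sub1G.
Qed.

Lemma commg_ZN_sub : [~: ZN G N, G] \subset N.
Proof.
rewrite gen_subG; apply/subsetP=> _ /imset2P[x y ZNx Gy ->].
by move: ZNx; rewrite mem_ZN => /andP[_ /subsetP]; apply; rewrite mem_commg ?set11.
Qed.

End CommutatorModulo.

Section CharacterCenters.

Variables (gT : finGroupType) (G : {group gT}).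

Lemma cfcenter_irrE (i : Iirr G) : ('Z(('chi_i)%R)%CF = ZN G (cfker ('chi_i)%R))%g.
Proof. by rewrite /ZN -(quotientGK (cfker_center_normal _)) cfcenter_eq_center. Qed.

Lemma center_proper_cfcenter (i : Iirr G) g :
    g \in G -> g \notin 'Z(G) -> [~: [set g], G] \subset cfker ('chi_i)%R ->
  'Z(G) \proper 'Z(('chi_i)%R)%CF.
Proof.
move=> Gg nZg sgGker; apply/properP; split.
  by rewrite -cap_cfcenter_irr (bigcap_inf i).
by exists g; rewrite // cfcenter_irrE mem_ZN ?cfker_normal ?Gg.
Qed.

Lemma KG_normal : KG G <| G.
Proof.
rewrite /KG; case: ifP => _; first exact: normal_refl.
apply/norm_normalI/norms_bigcap/bigcapsP => i _; exact: cfker_norm.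
Qed.

Lemma KG_sub_commg g : g \in G -> g \notin 'Z(G) -> KG G \subset [~: [set g], G].
Proof.
move=> Gg nZg; rewrite /KG; case: ifP => [/center_idP ZG | _].
  by rewrite ZG Gg in nZg.
have nsgGG : [~: [set g], G] <| G.
  by rewrite /normal comm_subG ?sub1set // commg_normr.
rewrite -(cap_cfker_normal nsgGG); apply: subset_trans (subsetIr _ _) _.
apply/bigcapsP => i sgGker; apply: bigcap_inf.
exact: center_proper_cfcenter sgGker.
Qed.

End CharacterCenters.

Theorem lemma3p6 (gT : finGroupType) (G K : {group gT}) :
  K :=: KG G ->
  K :!=: 1 ->
  'Z(G) \proper 'Z_2(G) ->
  (('Z(G) \proper ZN G K) <-> (exists2 g, g \in G & commg_elt g G = K)) /\
  ((exists2 g, g \in G & commg_elt g G = K) <-> (K :=: [~: ZN G K, G])).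
Proof.
move=> defK ntK _.
have nsKG : K <| G by rewrite defK KG_normal.
have e12 : 'Z(G) \proper ZN G K <-> exists2 g, g \in G & commg_elt g G = K.
  split=> [/properP[_ [g]] | [g Gg]]; rewrite ?commg_eltE.
    rewrite mem_ZN // => /andP[Gg sgGK] nZg; exists g; rewrite // commg_eltE.
    by apply/eqP; rewrite eqEsubset sgGK defK KG_sub_commg.
  move=> defgG; apply/properP; split; first exact: center_sub_ZN.
  exists g; first by rewrite mem_ZN // Gg defgG subxx.
  by rewrite -commg_set1_center // defgG.
have e23 : (exists2 g, g \in G & commg_elt g G = K) -> K :=: [~: ZN G K, G].
  case=> g Gg; rewrite commg_eltE => defgG; apply/eqP.
  rewrite eqEsubset commg_ZN_sub // andbT -{1}defgG commgSS // sub1set.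
  by rewrite mem_ZN // Gg defgG subxx.
have e31 : K :=: [~: ZN G K, G] -> 'Z(G) \proper ZN G K.
  move=> defK'; rewrite properEneq center_sub_ZN // andbT.
  apply: contra_neq ntK => ZG_ZNK; rewrite defK' -ZG_ZNK; apply/commG1P/subsetIr.
by split=> //; split=> [/e23 | /e31/e12].
Qed.
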